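(* Let $0<q<1/2$, $p=1-q$, $\lambda=q/p$. For each integer $z\ge2$ let $\kappa(z)$ be the unique $\kappa\in(0,+\infty)$ satisfying $$\sum_{j=1}^{z-1}\left(\prod_{i=1}^{j}\left(1-\frac iz\right)\right)\frac{1}{\kappa^j}=\frac{\lambda}{1-\lambda}.$$ Then as $z\to+\infty$, $$\kappa(z)=\frac pq-\frac{p^2}{q(p-q)}\,\frac1z+o(z^{-1}).$$
   Context: The left-hand side is strictly decreasing in $\kappa$ from $+\infty$ to $0$, so $\kappa(z)$ is well defined. *)

From Stdlib Require Import Reals.
Open Scope R_scope.

Fixpoint kprod (z j : nat) : R :=
  match j with
  | O => 1
  | S j' => kprod z j' * (1 - INR (S j') / INR z)
  end.

Fixpoint ksum (z : nat) (k : R) (n : nat) : R :=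
  match n with
  | O => 0
  | S n' => ksum z k n' + kprod z (S n') / k ^ (S n')
  end.

Definition kappa_lhs (z : nat) (k : R) : R := ksum z k (z - 1).

From Stdlib Require Import Reals Lra Lia Psatz.
From Coquelicot Require Import Coquelicot.
Open Scope R_scope.

(* Put t = 1/z, l = q/p and x = 1/kappa z.  Since [kpoly z x] is
   sum_{j<z} prod_{i<=j} (1 - i/z) x^j, the defining equation reads
   [kpoly z x = 1/(1-l)].  With s = j(j+1)/(2z) each product lies between 1 - s
   and 1 - s + s^2/2, and j^k b^j is bounded and summable for b < 1, so
   kpoly z x = 1/(1-x) - t x/(1-x)^3 + O(t^2) uniformly for x in [0,b].  As
   kpoly z is increasing and 1/(1-b) > 1/(1-l) for b = (1+l)/2, the root x
   stays in [0,b] for large z.  Solving the perturbed equation gives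
   x = l + t l/(1-l) + O(t^2), hence 1/x = 1/l - t/(l(1-l)) + O(t^2), and
   1/l = p/q, l(1-l) = q(p-q)/p^2. *)

Lemma pow_le_one y m : 0 <= y <= 1 -> y ^ m <= 1.
Proof. intros Hy. rewrite <- (pow1 m). apply pow_incr. lra. Qed.

Lemma sqrt_unit_interval b : 0 <= b < 1 -> 0 <= sqrt b < 1.
Proof.
  intros Hb. split; [apply sqrt_pos|].
  rewrite <- sqrt_1. apply sqrt_lt_1_alt. lra.
Qed.

Lemma pow_sqrt_mul b m : 0 <= b -> b ^ m = sqrt b ^ m * sqrt b ^ m.
Proof. intros Hb. rewrite <- Rpow_mult_distr, sqrt_sqrt; lra. Qed.

Lemma geom_sum_tail y n : y <> 1 ->
  / (1 - y) - sum_f_R0 (fun j => y ^ j) n = y ^ S n / (1 - y).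
Proof. intros Hy. rewrite tech3 by exact Hy. field. lra. Qed.

Lemma geom_sum_le y n : 0 <= y < 1 -> sum_f_R0 (fun j => y ^ j) n <= / (1 - y).
Proof.
  intros Hy. assert (Htail := geom_sum_tail y n ltac:(lra)).
  assert (0 <= y ^ S n / (1 - y)).
  { apply Rmult_le_pos; [apply pow_le; lra | apply Rlt_le, Rinv_0_lt_compat; lra]. }
  lra.
Qed.

Lemma INR_mul_pow_le y m : 0 <= y < 1 -> INR m * y ^ m <= / (1 - y).
Proof.
  intros Hy.
  assert (Hbern : INR m * y ^ m * (1 - y) <= 1 - y ^ m).
  { induction m as [|m IH]; [simpl; lra|].
    rewrite S_INR; simpl.
    assert (0 <= y ^ m <= 1) by (split; [apply pow_le | apply pow_le_one]; lra).
    assert (0 <= (1 - y) * (1 - y * y ^ m)) by (apply Rmult_le_pos; nra).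
    nra. }
  apply Rmult_le_reg_r with (1 - y); [lra|].
  rewrite Rinv_l by lra. assert (0 <= y ^ m) by (apply pow_le; lra). lra.
Qed.

Lemma pow_mul_geom_bounded k : forall b, 0 <= b < 1 ->
  exists M, forall m, INR m ^ k * b ^ m <= M.
Proof.
  induction k as [|k IH]; intros b Hb.
  - exists 1. intros m. rewrite pow_O, Rmult_1_l. apply pow_le_one. lra.
  - assert (Hs := sqrt_unit_interval b Hb).
    destruct (IH (sqrt b) Hs) as [M HM].
    exists (/ (1 - sqrt b) * M). intros m.
    rewrite (pow_sqrt_mul b m) by lra.
    replace (INR m ^ S k * (sqrt b ^ m * sqrt b ^ m))
      with ((INR m * sqrt b ^ m) * (INR m ^ k * sqrt b ^ m)) by (simpl; ring).
    assert (0 <= INR m) by apply pos_INR.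
    assert (0 <= sqrt b ^ m) by (apply pow_le; lra).
    apply Rmult_le_compat; [ apply Rmult_le_pos; auto
                           | apply Rmult_le_pos; [apply pow_le|]; auto
                           | apply INR_mul_pow_le; lra
                           | apply HM ].
Qed.

Lemma pow_mul_geom_sum_bounded k b : 0 <= b < 1 ->
  exists K, forall n, sum_f_R0 (fun j => INR j ^ k * b ^ j) n <= K.
Proof.
  intros Hb. assert (Hs := sqrt_unit_interval b Hb).
  destruct (pow_mul_geom_bounded k (sqrt b) Hs) as [M HM].
  assert (HM0 : 0 <= M).
  { apply Rle_trans with (INR 0 ^ k * sqrt b ^ 0); [|apply HM].
    apply Rmult_le_pos; apply pow_le; simpl; lra. }
  exists (M * / (1 - sqrt b)). intros n.
  apply Rle_trans with (sum_f_R0 (fun j => sqrt b ^ j * M) n).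
  - apply sum_Rle. intros j _.
    rewrite (pow_sqrt_mul b j) by lra.
    assert (HMj := HM j). assert (0 <= sqrt b ^ j) by (apply pow_le; lra).
    nra.
  - rewrite <- scal_sum. apply Rmult_le_compat_l; [lra|]. apply geom_sum_le. lra.
Qed.

Lemma pow_le_of_mul_bound k b M x m : 0 <= x <= b -> (0 < m)%nat ->
  INR m ^ k * b ^ m <= M -> x ^ m <= M * (/ INR m) ^ k.
Proof.
  intros Hx Hm HM.
  assert (Hpos : 0 < INR m ^ k) by (apply pow_lt, lt_0_INR; lia).
  replace (x ^ m) with ((INR m ^ k * x ^ m) * (/ INR m) ^ k)
    by (rewrite pow_inv; field; lra).
  apply Rmult_le_compat_r; [apply pow_le, Rlt_le, Rinv_0_lt_compat, lt_0_INR; lia|].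
  apply Rle_trans with (INR m ^ k * b ^ m); [|exact HM].
  apply Rmult_le_compat_l; [lra|]. apply pow_incr. lra.
Qed.

Lemma inv_one_sub_pow_le x b k : 0 <= x <= b -> b < 1 -> / (1 - x) ^ k <= / (1 - b) ^ k.
Proof.
  intros Hx Hb. apply Rinv_le_contravar; [apply pow_lt; lra|]. apply pow_incr. lra.
Qed.

Lemma div_one_sub_pow_le x b k : 0 <= x <= b -> b < 1 -> x / (1 - x) ^ k <= b / (1 - b) ^ k.
Proof.
  intros Hx Hb. apply Rmult_le_compat; try lra.
  - apply Rlt_le, Rinv_0_lt_compat, pow_lt. lra.
  - apply inv_one_sub_pow_le; lra.
Qed.

Definition triangular (j : nat) : R := INR j * INR (S j) / 2.

Lemma triangular_S j : triangular (S j) = triangular j + INR (S j).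
Proof. unfold triangular. rewrite !S_INR. field. Qed.

Lemma triangular_bounds j : 0 <= triangular j <= INR j ^ 2.
Proof.
  unfold triangular. destruct j as [|j]; [simpl; lra|].
  assert (1 <= INR (S j)) by (apply (le_INR 1); lia).
  rewrite (S_INR (S j)). split; nra.
Qed.

Lemma tri_geom_sum_tail x n : 0 <= x < 1 ->
  0 <= x / (1 - x) ^ 3 - sum_f_R0 (fun j => triangular j * x ^ j) n
    <= INR (S n) ^ 2 * x ^ S n / (1 - x) ^ 3.
Proof.
  intros Hx.
  set (Q := fun m => triangular m * (1 - x) ^ 2 + INR (S m) - INR m * x).
  assert (Hclosed : forall m, sum_f_R0 (fun j => triangular j * x ^ j) m
                              = (x - x ^ S m * Q m) / (1 - x) ^ 3).
  { induction m as [|m IH].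
    - unfold Q, triangular. simpl. field. lra.
    - rewrite tech5, IH. unfold Q. rewrite triangular_S.
      unfold triangular. rewrite !S_INR. simpl. field. lra. }
  rewrite Hclosed.
  assert (HQ : 0 <= Q n <= INR (S n) ^ 2).
  { unfold Q. assert (HT := triangular_bounds (S n)). rewrite triangular_S in HT.
    assert (0 <= INR n) by apply pos_INR. rewrite S_INR in *.
    assert (0 <= (1 - x) ^ 2 <= 1) by (split; nra).
    assert (0 <= triangular n) by apply triangular_bounds.
    split; nra. }
  replace (x / (1 - x) ^ 3 - (x - x ^ S n * Q n) / (1 - x) ^ 3)
    with (x ^ S n * Q n / (1 - x) ^ 3) by (field; lra).
  assert (0 <= x ^ S n) by (apply pow_le; lra).
  assert (0 < / (1 - x) ^ 3) by (apply Rinv_0_lt_compat, pow_lt; lra).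
  unfold Rdiv. split; [apply Rmult_le_pos; nra|].
  apply Rmult_le_compat_r; [lra|]. nra.
Qed.

Lemma kprod_bounds z j : (1 <= z)%nat -> (j <= z)%nat ->
  0 <= kprod z j /\
  1 - triangular j / INR z <= kprod z j <=
    1 - triangular j / INR z + (triangular j / INR z) ^ 2 / 2.
Proof.
  intros Hz. induction j as [|j IH]; intros Hj.
  - unfold triangular. simpl. lra.
  - assert (HzR : 0 < INR z) by (apply lt_0_INR; lia).
    destruct (IH ltac:(lia)) as [H0 [H1 H2]].
    set (s := triangular j / INR z) in *.
    set (a := INR (S j) / INR z).
    assert (Ha : 0 <= a <= 1).
    { assert (INR (S j) <= INR z) by (apply le_INR; lia).
      unfold a. split; [apply Rmult_le_pos; [apply pos_INR | apply Rlt_le, Rinv_0_lt_compat; lra]|].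
      apply Rmult_le_reg_r with (INR z); [lra|]. unfold Rdiv. rewrite Rmult_assoc, Rinv_l; lra. }
    assert (Hs : 0 <= s).
    { unfold s. apply Rmult_le_pos;
        [apply triangular_bounds | apply Rlt_le, Rinv_0_lt_compat; lra]. }
    replace (triangular (S j) / INR z) with (s + a)
      by (unfold s, a; rewrite triangular_S; field; lra).
    change (kprod z (S j)) with (kprod z j * (1 - a)).
    split; [nra|]. split; nra.
Qed.

Definition kpoly (z : nat) (x : R) : R :=
  sum_f_R0 (fun j => kprod z j * x ^ j) (z - 1).

Lemma ksum_eq_sum z k n : k <> 0 ->
  ksum z k n = sum_f_R0 (fun j => kprod z j * (/ k) ^ j) n - 1.
Proof.
  intros Hk. induction n as [|n IH]; [simpl; ring|].
  cbn [ksum]. rewrite tech5, IH, pow_inv. unfold Rdiv. ring.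
Qed.

Lemma kappa_lhs_kpoly z k : k <> 0 -> kappa_lhs z k = kpoly z (/ k) - 1.
Proof. intros Hk. apply ksum_eq_sum, Hk. Qed.

Lemma kpoly_le_compat z x y : (1 <= z)%nat -> 0 <= x <= y -> kpoly z x <= kpoly z y.
Proof.
  intros Hz Hxy. apply sum_Rle. intros j Hj.
  apply Rmult_le_compat_l; [apply (kprod_bounds z j); lia|].
  apply pow_incr. exact Hxy.
Qed.

Lemma kprod_sum_error n x b : 0 <= x <= b ->
  Rabs (sum_f_R0 (fun j => (kprod (S n) j - (1 - triangular j / INR (S n))) * x ^ j) n)
    <= (/ INR (S n)) ^ 2 / 2 * sum_f_R0 (fun j => INR j ^ 4 * b ^ j) n.
Proof.
  intros Hx. eapply Rle_trans; [apply Rabs_triang_gen|].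
  rewrite scal_sum. apply sum_Rle. intros j Hj.
  destruct (kprod_bounds (S n) j ltac:(lia) ltac:(lia)) as [_ HP].
  set (s := triangular j / INR (S n)) in HP.
  assert (Hxj : 0 <= x ^ j <= b ^ j) by (split; [apply pow_le | apply pow_incr]; lra).
  assert (Hs2 : s ^ 2 <= (/ INR (S n)) ^ 2 * INR j ^ 4).
  { assert (HT := triangular_bounds j).
    replace (INR j ^ 4) with ((INR j ^ 2) ^ 2) by ring.
    unfold s, Rdiv. rewrite Rpow_mult_distr, Rmult_comm.
    apply Rmult_le_compat_l; [apply pow_le, Rlt_le, Rinv_0_lt_compat, lt_0_INR; lia|].
    apply pow_incr. exact HT. }
  rewrite Rabs_mult, (Rabs_pos_eq (x ^ j)) by lra.
  assert (Habs : Rabs (kprod (S n) j - (1 - s)) <= s ^ 2 / 2)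
    by (apply Rabs_le_between; lra).
  apply Rle_trans with (s ^ 2 / 2 * b ^ j).
  - apply Rmult_le_compat; [apply Rabs_pos | lra | exact Habs | lra].
  - assert (0 <= b ^ j) by lra. nra.
Qed.

Lemma geom_sum_tail_bound n x b M : 0 <= x <= b -> b < 1 ->
  INR (S n) ^ 2 * b ^ S n <= M ->
  0 <= / (1 - x) - sum_f_R0 (fun j => x ^ j) n <= M / (1 - b) * (/ INR (S n)) ^ 2.
Proof.
  intros Hx Hb HM.
  assert (Hpow := pow_le_of_mul_bound 2 b M x (S n) Hx ltac:(lia) HM).
  assert (0 <= x ^ S n) by (apply pow_le; lra).
  assert (/ (1 - x) <= / (1 - b)) by (apply Rinv_le_contravar; lra).
  assert (0 < / (1 - x)) by (apply Rinv_0_lt_compat; lra).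
  rewrite geom_sum_tail by lra. unfold Rdiv. split; nra.
Qed.

Lemma tri_geom_sum_tail_bound n x b M : 0 <= x <= b -> b < 1 ->
  INR (S n) ^ 3 * b ^ S n <= M ->
  0 <= / INR (S n) * (x / (1 - x) ^ 3 - sum_f_R0 (fun j => triangular j * x ^ j) n)
    <= M / (1 - b) ^ 3 * (/ INR (S n)) ^ 2.
Proof.
  intros Hx Hb HM.
  assert (HZ : 0 < INR (S n)) by (apply lt_0_INR; lia).
  set (t := / INR (S n)).
  assert (Ht : 0 < t) by (apply Rinv_0_lt_compat; lra).
  assert (HtZ : t * INR (S n) = 1) by (unfold t; field; lra).
  assert (Hpow := pow_le_of_mul_bound 3 b M x (S n) Hx ltac:(lia) HM). fold t in Hpow.
  destruct (tri_geom_sum_tail x n ltac:(lra)) as [HT0 HT1].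
  assert (Hx3 := inv_one_sub_pow_le x b 3 Hx Hb).
  split; [apply Rmult_le_pos; lra|].
  apply Rle_trans with (t * (INR (S n) ^ 2 * (M * t ^ 3) * / (1 - b) ^ 3)).
  - apply Rmult_le_compat_l; [lra|]. eapply Rle_trans; [exact HT1|]. unfold Rdiv.
    apply Rmult_le_compat; [| apply Rlt_le, Rinv_0_lt_compat, pow_lt; lra | | exact Hx3].
    + apply Rmult_le_pos; [apply pow_le|apply pow_le]; lra.
    + apply Rmult_le_compat_l; [apply pow_le|]; lra.
  - right. replace (t * (INR (S n) ^ 2 * (M * t ^ 3) * / (1 - b) ^ 3))
      with ((t * INR (S n)) ^ 2 * (M / (1 - b) ^ 3 * t ^ 2)) by (unfold Rdiv; ring).
    rewrite HtZ. ring.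
Qed.

Lemma kpoly_expansion b : 0 <= b < 1 ->
  exists C, 0 <= C /\ forall z x, (1 <= z)%nat -> 0 <= x <= b ->
    Rabs (kpoly z x - (/ (1 - x) - / INR z * (x / (1 - x) ^ 3))) <= C * (/ INR z) ^ 2.
Proof.
  intros Hb.
  destruct (pow_mul_geom_bounded 2 b Hb) as [M2 HM2].
  destruct (pow_mul_geom_bounded 3 b Hb) as [M3 HM3].
  destruct (pow_mul_geom_sum_bounded 4 b Hb) as [K HK].
  assert (HM2' := HM2 0%nat). assert (HM3' := HM3 0%nat). assert (HK' := HK 0%nat).
  simpl in HM2', HM3', HK'.
  assert (0 < / (1 - b) ^ 3) by (apply Rinv_0_lt_compat, pow_lt; lra).
  assert (0 < / (1 - b)) by (apply Rinv_0_lt_compat; lra).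
  exists (K / 2 + M2 / (1 - b) + M3 / (1 - b) ^ 3). split; [unfold Rdiv; nra|].
  intros z x Hz Hx. destruct z as [|n]; [lia|].
  unfold kpoly. replace (S n - 1)%nat with n by lia.
  assert (HZ : 0 < INR (S n)) by (apply lt_0_INR; lia).
  set (t := / INR (S n)).
  set (A := sum_f_R0 (fun j => (kprod (S n) j - (1 - triangular j / INR (S n))) * x ^ j) n).
  set (B := / (1 - x) - sum_f_R0 (fun j => x ^ j) n).
  set (T := x / (1 - x) ^ 3 - sum_f_R0 (fun j => triangular j * x ^ j) n).
  assert (HA : A = sum_f_R0 (fun j => kprod (S n) j * x ^ j) n - sum_f_R0 (fun j => x ^ j) n
                   + t * sum_f_R0 (fun j => triangular j * x ^ j) n).
  { unfold A. rewrite scal_sum, <- minus_sum, <- sum_plus. apply sum_eq.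
    intros j _. unfold t. field. lra. }
  replace (sum_f_R0 (fun j => kprod (S n) j * x ^ j) n - (/ (1 - x) - t * (x / (1 - x) ^ 3)))
    with (A - B + t * T) by (unfold B, T; rewrite HA; ring).
  assert (HAb : Rabs A <= K / 2 * t ^ 2).
  { eapply Rle_trans; [apply (kprod_sum_error n x b Hx)|]. fold t.
    assert (HKn := HK n). assert (0 <= t ^ 2) by (apply pow_le, Rlt_le, Rinv_0_lt_compat; lra).
    nra. }
  assert (HBb := geom_sum_tail_bound n x b M2 Hx ltac:(lra) (HM2 (S n))).
  assert (HTb := tri_geom_sum_tail_bound n x b M3 Hx ltac:(lra) (HM3 (S n))).
  fold t B T in HBb, HTb.
  apply Rabs_le_between in HAb. apply Rabs_le_between. lra.
Qed.

Section PerturbedRoot.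

Variables l b E t x : R.
Hypotheses (Hl : 0 < l < 1) (Hb : b < 1) (Hx : 0 < x <= b) (Ht : 0 < t <= 1).
Hypothesis Herr : Rabs (/ (1 - l) - (/ (1 - x) - t * (x / (1 - x) ^ 3))) <= E * t ^ 2.

Let D := b / (1 - b) ^ 2 + E.

Lemma perturbed_root_first_order : Rabs (x - l) <= D * t.
Proof.
  set (e := / (1 - l) - (/ (1 - x) - t * (x / (1 - x) ^ 3))) in Herr.
  replace (x - l) with (t * ((1 - l) * (x / (1 - x) ^ 2)) - (1 - x) * (1 - l) * e)
    by (unfold e; field; lra).
  assert (Hq : 0 <= x / (1 - x) ^ 2 <= b / (1 - b) ^ 2).
  { split; [apply Rmult_le_pos; [lra | apply Rlt_le, Rinv_0_lt_compat, pow_lt; lra]|].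
    apply div_one_sub_pow_le; lra. }
  apply Rabs_le_between in Herr. apply Rabs_le_between. unfold D.
  assert (0 <= (1 - x) * (1 - l) <= 1) by (split; nra).
  assert (0 <= E * t ^ 2 <= E * t) by (split; nra).
  assert (0 <= t * ((1 - l) * (x / (1 - x) ^ 2)) <= t * (b / (1 - b) ^ 2)).
  { split; [apply Rmult_le_pos; nra|]. apply Rmult_le_compat_l; nra. }
  assert (- (E * t ^ 2) <= (1 - x) * (1 - l) * e <= E * t ^ 2) by (split; nra).
  split; nra.
Qed.

Let C1 := D / ((1 - b) ^ 2 * (1 - l)) + E.

Lemma perturbed_root_second_order : Rabs (x - l - t * (l / (1 - l))) <= C1 * t ^ 2.
Proof.
  assert (Hfirst := perturbed_root_first_order).
  set (e := / (1 - l) - (/ (1 - x) - t * (x / (1 - x) ^ 3))) in Herr.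
  set (w := (1 - x * l) / ((1 - x) ^ 2 * (1 - l))).
  replace (x - l - t * (l / (1 - l))) with (t * (x - l) * w - (1 - x) * (1 - l) * e)
    by (unfold e, w; field; lra).
  assert (Hw : 0 <= w <= / ((1 - b) ^ 2 * (1 - l))).
  { assert (0 < (1 - b) ^ 2 * (1 - l)) by (apply Rmult_lt_0_compat; [apply pow_lt|]; lra).
    assert (/ ((1 - x) ^ 2 * (1 - l)) <= / ((1 - b) ^ 2 * (1 - l))).
    { apply Rinv_le_contravar; [assumption|].
      apply Rmult_le_compat_r; [lra|]. apply pow_incr. lra. }
    assert (0 < / ((1 - x) ^ 2 * (1 - l)))
      by (apply Rinv_0_lt_compat, Rmult_lt_0_compat; [apply pow_lt|]; lra).
    assert (0 <= 1 - x * l <= 1) by (split; nra).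
    unfold w, Rdiv. split; [apply Rmult_le_pos; lra|].
    rewrite <- (Rmult_1_l (/ ((1 - b) ^ 2 * (1 - l)))).
    apply Rmult_le_compat; lra. }
  apply Rabs_le_between in Herr. apply Rabs_le_between in Hfirst. apply Rabs_le_between.
  set (W := / ((1 - b) ^ 2 * (1 - l))) in Hw.
  assert (HD : 0 <= D * t) by lra.
  assert (Hlin : - (D * t * W) <= (x - l) * w <= D * t * W).
  { assert (- (D * t) * w <= (x - l) * w <= D * t * w)
      by (split; apply Rmult_le_compat_r; lra).
    assert (D * t * w <= D * t * W) by (apply Rmult_le_compat_l; lra).
    lra. }
  assert (- (t * (D * t * W)) <= t * (x - l) * w <= t * (D * t * W)).
  { replace (t * (x - l) * w) with (t * ((x - l) * w)) by ring.
    rewrite Ropp_mult_distr_r. split; apply Rmult_le_compat_l; lra. }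
  assert (0 <= (1 - x) * (1 - l) <= 1) by (split; nra).
  assert (- (E * t ^ 2) <= (1 - x) * (1 - l) * e <= E * t ^ 2) by (split; nra).
  replace (C1 * t ^ 2) with (t * (D * t * W) + E * t ^ 2) by (unfold C1, W, Rdiv; ring).
  lra.
Qed.

Lemma perturbed_root_inverse : D * t <= l / 2 ->
  Rabs (/ x - (/ l - t / (l * (1 - l)))) <= (C1 / l ^ 2 + 2 * D ^ 2 / l ^ 3) * t ^ 2.
Proof.
  intros Hsmall.
  assert (Hfirst := perturbed_root_first_order).
  assert (Hsecond := perturbed_root_second_order).
  apply Rabs_le_between in Hfirst.
  assert (Hxl : l / 2 <= x) by lra.
  replace (/ x - (/ l - t / (l * (1 - l))))
    with (- (x - l - t * (l / (1 - l))) / l ^ 2 + (x - l) ^ 2 / (l ^ 2 * x))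
    by (field; lra).
  eapply Rle_trans; [apply Rabs_triang|].
  rewrite Rmult_plus_distr_r. apply Rplus_le_compat.
  - unfold Rdiv. rewrite Rabs_mult, Rabs_Ropp, (Rabs_pos_eq (/ l ^ 2))
      by (apply Rlt_le, Rinv_0_lt_compat, pow_lt; lra).
    assert (0 < / l ^ 2) by (apply Rinv_0_lt_compat, pow_lt; lra).
    nra.
  - rewrite Rabs_pos_eq by (apply Rmult_le_pos; [apply pow2_ge_0 |
      apply Rlt_le, Rinv_0_lt_compat, Rmult_lt_0_compat; [apply pow_lt|]; lra]).
    assert (Hsq : (x - l) ^ 2 <= D ^ 2 * t ^ 2).
    { rewrite <- Rpow_mult_distr. apply pow_maj_Rabs, Rabs_le_between. lra. }
    apply Rle_trans with (D ^ 2 * t ^ 2 / (l ^ 2 * (l / 2))).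
    + unfold Rdiv. apply Rmult_le_compat; [apply pow2_ge_0 | | exact Hsq |].
      * apply Rlt_le, Rinv_0_lt_compat, Rmult_lt_0_compat; [apply pow_lt|]; lra.
      * apply Rinv_le_contravar; [apply Rmult_lt_0_compat; [apply pow_lt|]; lra|].
        apply Rmult_le_compat_l; [apply pow2_ge_0 | lra].
    + right. field. lra.
Qed.

End PerturbedRoot.

Lemma inverse_expansion l b E : 0 < l < 1 -> 0 < b < 1 -> 0 <= E ->
  exists C D, 0 <= D /\ forall t x, 0 < t <= 1 -> D * t <= l / 2 -> 0 < x <= b ->
    Rabs (/ (1 - l) - (/ (1 - x) - t * (x / (1 - x) ^ 3))) <= E * t ^ 2 ->
    Rabs (/ x - (/ l - t / (l * (1 - l)))) <= C * t ^ 2.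
Proof.
  intros Hl Hb HE. eexists. exists (b / (1 - b) ^ 2 + E). split.
  - assert (0 < b / (1 - b) ^ 2) by (apply Rdiv_lt_0_compat; [|apply pow_lt]; lra).
    lra.
  - intros t x Ht Hsmall Hx Herr.
    exact (perturbed_root_inverse l b E t x Hl ltac:(lra) Hx Ht Herr Hsmall).
Qed.

Lemma eventually_inv_INR_le d : 0 < d -> eventually (fun z => 0 < / INR z <= d).
Proof.
  intros Hd. destruct (INR_archimed d 1 Hd) as [N HN].
  exists (S N). intros z Hz.
  assert (HNz : INR N < INR z) by (apply lt_INR; lia).
  assert (HN0 : 0 <= INR N) by apply pos_INR.
  split; [apply Rinv_0_lt_compat; lra|].
  apply Rmult_le_reg_l with (INR z); [lra|]. rewrite Rinv_r by lra. nra.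
Qed.

Lemma eventually_mul_inv_INR_le D c : 0 <= D -> 0 < c ->
  eventually (fun z => 0 < / INR z <= 1 /\ D * / INR z <= c).
Proof.
  intros HD Hc.
  assert (Hd : 0 < Rmin 1 (c / (D + 1))) by (apply Rmin_pos; [|apply Rdiv_lt_0_compat]; lra).
  refine (filter_imp _ _ _ (eventually_inv_INR_le _ Hd)). intros z [Ht0 Ht].
  assert (Htc : / INR z <= c / (D + 1)) by (eapply Rle_trans; [apply Ht | apply Rmin_r]).
  apply Rmult_le_compat_l with (r := D + 1) in Htc; [|lra].
  replace ((D + 1) * (c / (D + 1))) with c in Htc by (field; lra).
  split; [split; [lra | eapply Rle_trans; [apply Ht | apply Rmin_l]] | nra].
Qed.

Section KappaAsymptotics.

Variables (l : R) (kappa : nat -> R).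
Hypothesis Hl : 0 < l < 1.
Hypothesis Hsol : forall z : nat, (2 <= z)%nat ->
  0 < kappa z /\ kappa_lhs z (kappa z) = l / (1 - l).

Lemma kpoly_at_solution z : (2 <= z)%nat -> kpoly z (/ kappa z) = / (1 - l).
Proof.
  intros Hz. destruct (Hsol z Hz) as [Hk Heq].
  rewrite kappa_lhs_kpoly in Heq by lra.
  replace (/ (1 - l)) with (l / (1 - l) + 1) by (field; lra). lra.
Qed.

Lemma eventually_inv_kappa_le b : l < b < 1 -> eventually (fun z => / kappa z <= b).
Proof.
  intros Hb.
  destruct (kpoly_expansion b) as [E [HE0 HE]]; [lra|].
  set (D := b / (1 - b) ^ 3 + E).
  assert (HD : 0 < D).
  { unfold D. assert (0 < b / (1 - b) ^ 3) by (apply Rdiv_lt_0_compat; [|apply pow_lt]; lra). lra. }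
  set (g := / (1 - b) - / (1 - l)).
  assert (Hg : 0 < g) by (unfold g; apply Rlt_0_minus, Rinv_lt_contravar; nra).
  assert (Hev := eventually_mul_inv_INR_le D (g / 2) ltac:(lra) ltac:(lra)).
  assert (H2 : eventually (fun z => (2 <= z)%nat)) by (exists 2%nat; auto).
  refine (filter_imp _ _ _ (filter_and _ _ H2 Hev)). intros z [Hz [[Ht0 Ht1] HDt]].
  set (t := / INR z) in *.
  assert (Heq := kpoly_at_solution z Hz).
  apply Rnot_lt_le. intros Hbx.
  assert (Hmono := kpoly_le_compat z b (/ kappa z) ltac:(lia) ltac:(lra)).
  assert (Hexp := HE z b ltac:(lia) ltac:(lra)). fold t in Hexp.
  apply Rabs_le_between in Hexp.
  assert (t * (b / (1 - b) ^ 3) + E * t ^ 2 <= D * t).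
  { unfold D.
    assert (0 <= b / (1 - b) ^ 3) by (apply Rlt_le, Rdiv_lt_0_compat; [|apply pow_lt]; lra).
    assert (E * t ^ 2 <= E * t) by (apply Rmult_le_compat_l; [lra | simpl; nra]).
    lra. }
  unfold g in Hg, HDt. lra.
Qed.

Lemma kappa_expansion : exists C, eventually (fun z =>
  Rabs (kappa z - (/ l - / INR z / (l * (1 - l)))) <= C * (/ INR z) ^ 2).
Proof.
  set (b := (1 + l) / 2). assert (Hb : l < b < 1) by (unfold b; lra).
  destruct (kpoly_expansion b) as [E [HE0 HE]]; [lra|].
  destruct (inverse_expansion l b E Hl ltac:(lra) HE0) as [C [D [HD Hinv]]].
  exists C.
  assert (H2 : eventually (fun z => (2 <= z)%nat)) by (exists 2%nat; auto).
  assert (Hl2 : 0 < l / 2) by lra.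
  refine (filter_imp _ _ _ (filter_and _ _ H2 (filter_and _ _ (eventually_inv_kappa_le b Hb)
            (eventually_mul_inv_INR_le D (l / 2) HD Hl2)))).
  intros z [Hz [Hxb [Ht HDt]]].
  assert (Hx : 0 < / kappa z) by (apply Rinv_0_lt_compat, Hsol, Hz).
  rewrite <- (Rinv_inv (kappa z)).
  apply Hinv; [exact Ht | exact HDt | lra |].
  rewrite <- (kpoly_at_solution z Hz). apply HE; [lia | lra].
Qed.

End KappaAsymptotics.

Theorem mainTheorem13 (q : R) (kappa : nat -> R) :
  0 < q -> q < 1/2 ->
  (forall z : nat, (2 <= z)%nat ->
     0 < kappa z /\
     kappa_lhs z (kappa z) = (q / (1 - q)) / (1 - q / (1 - q))) ->
  forall eps : R, 0 < eps ->
    exists N : nat, forall z : nat, (N <= z)%nat ->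
      Rabs (kappa z - ((1 - q) / q
              - (1 - q) ^ 2 / (q * ((1 - q) - q)) * (1 / INR z)))
        <= eps * (1 / INR z).
Proof.
  intros Hq0 Hq1 Hsol eps Heps.
  set (l := q / (1 - q)) in Hsol.
  assert (Hl : 0 < l < 1).
  { unfold l. split; [apply Rdiv_lt_0_compat; lra|].
    apply Rmult_lt_reg_r with (1 - q); [lra|]. unfold Rdiv. rewrite Rmult_assoc, Rinv_l; lra. }
  destruct (kappa_expansion l kappa Hl Hsol) as [C HC].
  refine (filter_imp _ _ _ (filter_and _ _ HC
            (eventually_mul_inv_INR_le (Rabs C) eps (Rabs_pos C) Heps))).
  intros z [Hz [[Ht0 Ht1] HCt]].
  set (t := / INR z) in *.
  replace (1 / INR z) with t by (unfold t, Rdiv; ring).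
  replace ((1 - q) / q - (1 - q) ^ 2 / (q * ((1 - q) - q)) * t)
    with (/ l - t / (l * (1 - l))) by (unfold l; field; lra).
  eapply Rle_trans; [exact Hz|].
  replace (C * t ^ 2) with (C * t * t) by ring.
  apply Rmult_le_compat_r; [lra|].
  eapply Rle_trans; [|exact HCt]. apply Rmult_le_compat_r; [lra | apply Rle_abs].
Qed.
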